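(* If $\gamma=0$, then for $u_1,\dots,u_n\in\mathcal B$, $R_n[X(u_1),\dots,X(u_n)]=\langle a^-(u_1)a^0(u_2)\cdots a^0(u_{n-1})a^+(u_n)\Omega,\Omega\rangle_{\gamma,\phi}$.
   Context: Let $\mathcal B$ be a unital $*$-algebra with star-linear maps $\phi:\mathcal B\to\mathbb C$, $\gamma:\mathcal B\to\mathcal B$, $\Lambda:\mathcal B\otimes_{alg}\mathcal B\to\mathcal B$, where $\phi$ is positive and faithful and $\gamma+\phi$ is completely positive, with $(\gamma+\phi)[b]:=\gamma[b]+\phi[b]1_{\mathcal B}$. Assume $\phi[v^*\Lambda(b\otimes u)]=\phi[\Lambda(b^*\otimes v)^*u]$ and $\gamma[v^*\Lambda(b\otimes u)]=\gamma[\Lambda(b^*\otimes v)^*u]$ for all $b,u,v$. On $\mathcal F_{alg}(\mathcal B)=\mathbb C\Omega\oplus\bigoplus_{n\ge1}\mathcal B^{\otimes n}$ use the form $\langle\Omega,\Omega\rangle_{\gamma,\phi}=1$, $\langle u_1\otimes\cdots\otimes u_n,v_1\otimes\cdots\otimes v_k\rangle_{\gamma,\phi}=\delta_{n=k}\phi[v_n^*(\gamma+\phi)[v_{n-1}^*\cdots(\gamma+\phi)[v_1^*u_1]\cdots u_{n-1}]u_n]$. For $b\in\mathcal B$: $a^+(b)\Omega=b$, $a^+(b)(u_1\otimes\cdots\otimes u_n)=b\otimes u_1\otimes\cdots\otimes u_n$; $a^-(b)\Omega=0$, $a^-(b)u_1=\phi[bu_1]\Omega$, $a^-(b)(u_1\otimes\cdots\otimes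 u_n)=(\gamma+\phi)[bu_1]u_2\otimes\cdots\otimes u_n$ ($n\ge2$); $a^0(b)\Omega=0$, $a^0(b)(u_1\otimes\cdots\otimes u_n)=\Lambda(b\otimes u_1)\otimes u_2\otimes\cdots\otimes u_n$; $X(b)=a^+(b)+a^-(b)+a^0(b)$. Free cumulants $R_k$ with respect to $\psi(A)=\langle A\Omega,\Omega\rangle_{\gamma,\phi}$ are defined by $\psi[Y_1\cdots Y_n]=\sum_{\pi\in\mathrm{NC}(n)}\prod_{V\in\pi}R_{|V|}[Y_{V(1)},\dots,Y_{V(|V|)}]$, $\mathrm{NC}(n)$ the noncrossing partitions of $\{1,\dots,n\}$. *)

From HB Require Import structures.
From mathcomp Require Import all_boot all_order all_algebra.
From mathcomp Require Export reals complex.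
Set Implicit Arguments. Unset Strict Implicit. Unset Printing Implicit Defensive.
Import Order.TTheory GRing.Theory Num.Theory.
Local Open Scope ring_scope.

Definition is_star_algebra (C : numClosedFieldType) (B : algType C) (star : B -> B) :=
  [/\ forall x, star (star x) = x,
      forall (a : C) (x y : B), star (a *: x + y) = a^* *: star x + star y
    & forall x y : B, star (x * y) = star y * star x].

Definition star_linear_functional (C : numClosedFieldType) (B : algType C)
    (star : B -> B) (phi : B -> C) :=
  (forall (a : C) (x y : B), phi (a *: x + y) = a * phi x + phi y) /\
  (forall x, phi (star x) = (phi x)^*).

Definition star_linear_map (C : numClosedFieldType) (B : algType C)
    (star : B -> B) (T : B -> B) :=
  (forall (a : C) (x y : B), T (a *: x + y) = a *: T x + T y) /\
  (forall x, T (star x) = star (T x)).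

(* Lambda : B (x)_alg B -> B, given through its (bilinear) restriction to
   elementary tensors Lam b c = Lambda (b (x) c); star-linearity w.r.t. the
   involution (b (x) c)^* = b^* (x) c^* on B (x) B. *)
Definition star_linear_bimap (C : numClosedFieldType) (B : algType C)
    (star : B -> B) (Lam : B -> B -> B) :=
  [/\ forall (a : C) (x y z : B), Lam (a *: x + y) z = a *: Lam x z + Lam y z,
      forall (a : C) (x y z : B), Lam z (a *: x + y) = a *: Lam z x + Lam z y
    & forall x y, star (Lam x y) = Lam (star x) (star y)].

Definition positive_functional (C : numClosedFieldType) (B : algType C)
    (star : B -> B) (phi : B -> C) := forall b, 0 <= phi (star b * b).

Definition faithful_functional (C : numClosedFieldType) (B : algType C)
    (star : B -> B) (phi : B -> C) := forall b, phi (star b * b) = 0 -> b = 0.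

Definition positive_elt (C : numClosedFieldType) (B : algType C)
    (star : B -> B) (x : B) := exists s : seq B, x = \sum_(c <- s) star c * c.

Definition gp (C : numClosedFieldType) (B : algType C)
    (phi : B -> C) (gamma : B -> B) (b : B) : B := gamma b + phi b *: 1.

Definition completely_positive (C : numClosedFieldType) (B : algType C)
    (star : B -> B) (T : B -> B) :=
  forall (n : nat) (b c : 'I_n -> B),
    positive_elt star
      (\sum_(i < n) \sum_(j < n) star (c i) * T (star (b i) * b j) * c j).

Definition Lambda_symmetric (C : numClosedFieldType) (B : algType C)
    (star : B -> B) (Lam : B -> B -> B) (f : B -> B) :=
  forall b u v : B, f (star v * Lam b u) = f (star (Lam (star b) v) * u).

Definition Lambda_symmetric_fun (C : numClosedFieldType) (B : algType C)
    (star : B -> B) (Lam : B -> B -> B) (f : B -> C) :=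
  forall b u v : B, f (star v * Lam b u) = f (star (Lam (star b) v) * u).

(* A vector of F_alg(B) is represented by a formal finite linear combination
   of elementary tensors: (c, [:: u_1; ...; u_n]) stands for
   c (u_1 (x) ... (x) u_n), and the empty word stands for Omega. *)
Definition fock (C : numClosedFieldType) (B : algType C) := seq (C * seq B).
Definition op (C : numClosedFieldType) (B : algType C) := fock B -> fock B.

Definition Omega (C : numClosedFieldType) (B : algType C) : fock B := [:: (1, [::])].

(* linear extension of an action on elementary tensors *)
Definition lift_op (C : numClosedFieldType) (B : algType C)
    (f : seq B -> fock B) : op B :=
  fun v => flatten [seq [seq (t.1 * s.1, s.2) | s <- f t.2] | t <- v].

Definition aplus_w (C : numClosedFieldType) (B : algType C) (b : B) (w : seq B) : fock B :=
  [:: (1, b :: w)].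

Definition aminus_w (C : numClosedFieldType) (B : algType C)
    (phi : B -> C) (gamma : B -> B) (b : B) (w : seq B) : fock B :=
  match w with
  | [::] => [::]
  | [:: u1] => [:: (phi (b * u1), [::])]
  | u1 :: u2 :: r => [:: (1, (gp phi gamma (b * u1) * u2) :: r)]
  end.

Definition azero_w (C : numClosedFieldType) (B : algType C)
    (Lam : B -> B -> B) (b : B) (w : seq B) : fock B :=
  match w with
  | [::] => [::]
  | u1 :: r => [:: (1, Lam b u1 :: r)]
  end.

Definition aplus (C : numClosedFieldType) (B : algType C) (b : B) : op B :=
  lift_op (aplus_w b).
Definition aminus (C : numClosedFieldType) (B : algType C)
    (phi : B -> C) (gamma : B -> B) (b : B) : op B :=
  lift_op (aminus_w phi gamma b).
Definition azero (C : numClosedFieldType) (B : algType C)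
    (Lam : B -> B -> B) (b : B) : op B :=
  lift_op (azero_w Lam b).

(* X(b) = a^+(b) + a^-(b) + a^0(b)   (concatenation = sum of formal sums) *)
Definition Xop (C : numClosedFieldType) (B : algType C)
    (phi : B -> C) (gamma : B -> B) (Lam : B -> B -> B) (b : B) : op B :=
  fun v => aplus b v ++ aminus phi gamma b v ++ azero Lam b v.

(* <u_1 .. u_n, v_1 .. v_k> = delta_{n=k}
     phi[v_n^* (g+p)[v_{n-1}^* ... (g+p)[v_1^* u_1] ... u_{n-1}] u_n],
   and <Omega, Omega> = 1 *)
Definition word_form (C : numClosedFieldType) (B : algType C)
    (star : B -> B) (phi : B -> C) (gamma : B -> B) (u v : seq B) : C :=
  if size u != size v then 0 else
  match u, v with
  | u1 :: us, v1 :: vs =>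
      phi (foldl (fun x p => star p.2 * gp phi gamma x * p.1)
                 (star v1 * u1) (zip us vs))
  | _, _ => 1
  end.

Definition fock_form (C : numClosedFieldType) (B : algType C)
    (star : B -> B) (phi : B -> C) (gamma : B -> B) (x y : fock B) : C :=
  \sum_(s <- x) \sum_(t <- y) s.1 * (t.1)^* * word_form star phi gamma s.2 t.2.

Definition psi (C : numClosedFieldType) (B : algType C)
    (star : B -> B) (phi : B -> C) (gamma : B -> B) (A : op B) : C :=
  fock_form star phi gamma (A (Omega B)) (Omega B).

(* operator product Y_1 Y_2 ... Y_n (Y_n acts first) *)
Definition prod_op (C : numClosedFieldType) (B : algType C) (s : seq (op B)) : op B :=
  foldr (fun f g => f \o g) id s.

Definition noncrossing (n : nat) (P : {set {set 'I_n}}) : bool :=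
  ~~ [exists V in P, exists W in P, exists a : 'I_n, exists b : 'I_n,
        exists c : 'I_n, exists d : 'I_n,
        [&& V != W, (a < b)%N, (b < c)%N, (c < d)%N,
            a \in V, c \in V, b \in W & d \in W]].

Definition NCpart (n : nat) (P : {set {set 'I_n}}) : bool :=
  partition P [set: 'I_n] && noncrossing P.

(* Rc : seq (op B) -> C is the family of free cumulants (R_k applied to a list
   of length k) of the functional ps: the moment-cumulant relation
   ps[Y_1 ... Y_n] = sum_{pi in NC(n)} prod_{V in pi} R_{|V|}[Y_V] holds. *)
Definition free_cumulants (C : numClosedFieldType) (B : algType C)
    (ps : op B -> C) (Rc : seq (op B) -> C) :=
  forall (n : nat) (Y : 'I_n -> op B),
    ps (prod_op [seq Y i | i <- enum 'I_n]) =
    \sum_(P : {set {set 'I_n}} | NCpart P) \prod_(V in P) Rc [seq Y i | i <- enum V].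

From HB Require Import structures.
From mathcomp Require Import all_boot all_order all_algebra.
From mathcomp Require Import reals complex.
From mathcomp Require Import zify.
Set Implicit Arguments. Unset Strict Implicit. Unset Printing Implicit Defensive.
Import Order.TTheory GRing.Theory Num.Theory.
Local Open Scope ring_scope.

(* With gamma = 0, the Omega-coefficient of X(v_k) ... X(v_1) applied to a word s
   obeys a three-term recursion: X(v_1) creates a letter, annihilates the first
   letter of s, or merges with it through Lam.  Regard the letters of s as points
   that have been created but not yet annihilated; the amplitude is then a sum over
   noncrossing partitions without singletons in which these open points lie in
   distinct blocks, a block b_1 < ... < b_k weighing
   phi[b_1 Lam(b_2, ... Lam(b_{k-1}, b_k))].  The recursion is matched on the
   partition side by classifying the block of the point p just before the open
   ones: either p is itself open, or {p, p+1} is a block (annihilation), or p and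
   p+1 share a larger block, which is collapsed to a single point (preservation).
   For s empty this writes the moments psi[X(w_1) ... X(w_n)] as a sum of products
   of block weights over NC(n); the moment-cumulant relation then identifies, by
   induction on n, the cumulant R_n with the weight of the one-block partition,
   which is the right-hand side. *)

Section VacuumExpectation.
Variables (C : numClosedFieldType) (B : algType C).
Variables (phi : B -> C) (gamma : B -> B) (Lam : B -> B -> B).
Hypothesis gamma0 : forall b, gamma b = 0.

Definition omega_coord (v : fock B) : C := \sum_(t <- v) t.1 * (t.2 == [::])%:R.

Lemma psiE (star : B -> B) (A : op B) :
  psi star phi gamma A = omega_coord (A (Omega B)).
Proof.
rewrite /psi /fock_form /omega_coord; apply: eq_bigr => -[c w] _.
by rewrite big_seq1 /= conjC1 mulr1; case: w.
Qed.

Lemma prod_op_rcons (L : seq (op B)) (f : op B) (v : fock B) :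
  prod_op (rcons L f) v = prod_op L (f v).
Proof. by elim: L => //= g L ->. Qed.

Lemma sum_lift_op (g : seq B -> fock B) (H : seq B -> C) (v : fock B) :
  \sum_(q <- lift_op g v) q.1 * H q.2 = \sum_(t <- v) t.1 * \sum_(q <- g t.2) q.1 * H q.2.
Proof.
elim: v => [|t v IH]; first by rewrite !big_nil.
have -> : lift_op g (t :: v) = [seq (t.1 * q.1, q.2) | q <- g t.2] ++ lift_op g v by [].
rewrite big_cat IH big_cons big_map mulr_sumr; congr (_ + _).
by apply: eq_bigr => q _; rewrite mulrA.
Qed.

(* The Omega-coefficient of X(v_k) ... X(v_1) s when gamma = 0; the three
   summands come from a^+(v_1), a^-(v_1) and a^0(v_1). *)
Fixpoint vacuum_amplitude (v s : seq B) : C :=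
  match v with
  | [::] => (s == [::])%:R
  | b :: v' =>
      vacuum_amplitude v' (b :: s)
      + match s with
        | [::] => 0
        | [:: t] => phi (b * t) * vacuum_amplitude v' [::]
        | t :: t2 :: r => vacuum_amplitude v' (phi (b * t) *: t2 :: r)
        end
      + if s is t :: r then vacuum_amplitude v' (Lam b t :: r) else 0
  end.

Lemma omega_coord_prod_Xop (w : seq B) (v : fock B) :
  omega_coord (prod_op (map (Xop phi gamma Lam) w) v)
  = \sum_(t <- v) t.1 * vacuum_amplitude (rev w) t.2.
Proof.
elim/last_ind: w v => [|w b IH] v; first by [].
rewrite map_rcons prod_op_rcons IH rev_rcons /Xop !big_cat /= !sum_lift_op.
rewrite -!big_split /=; apply: eq_bigr => -[c s] _ /=.
rewrite -!mulrDr; congr (_ * _).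
case: s => [|x [|y r]]; rewrite /= ?big_nil ?big_seq1 /= ?mul1r ?addr0 ?addrA //.
by rewrite /gp gamma0 add0r -scalerAl mul1r.
Qed.

Lemma psi_prod_Xop (star : B -> B) (w : seq B) :
  psi star phi gamma (prod_op (map (Xop phi gamma Lam) w)) = vacuum_amplitude (rev w) [::].
Proof. by rewrite psiE omega_coord_prod_Xop big_seq1 mul1r. Qed.

Lemma prod_azero_letter (mid : seq B) (c : C) (y : B) :
  prod_op (map (azero Lam) mid) [:: (c, [:: y])] = [:: (c, [:: foldr Lam y mid])].
Proof. by elim: mid => //= b mid ->; rewrite /azero /lift_op /= mulr1. Qed.

Lemma psi_aminus_azero_aplus (star : B -> B) (u1 : B) (mid : seq B) (un : B) :
  psi star phi gamma
      (prod_op (aminus phi gamma u1 :: rcons [seq azero Lam u | u <- mid] (aplus un)))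
  = phi (u1 * foldr Lam un mid).
Proof.
rewrite psiE /= prod_op_rcons /aplus /lift_op /= mul1r -/(lift_op _ _) prod_azero_letter.
by rewrite /omega_coord /aminus /lift_op /= big_seq1 /= !mul1r mulr1.
Qed.

End VacuumExpectation.

Lemma linear_scale (R : pzRingType) (V W : lmodType R) (f : V -> W) :
  (forall a x y, f (a *: x + y) = a *: f x + f y) -> forall a x, f (a *: x) = a *: f x.
Proof.
move=> f_lin a x.
have f0 : f 0 = 0.
  by apply/(addrI (f 0)); rewrite addr0 -{1}(scale1r (f 0)) -f_lin scaler0 addr0.
by rewrite -[a *: x]addr0 f_lin f0 addr0.
Qed.

Section BlockWeight.
Variables (C : numClosedFieldType) (B : algType C) (phi : B -> C) (Lam : B -> B -> B).

Fixpoint nest_Lam (w : seq B) : B :=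
  match w with [::] => 0 | [:: y] => y | y :: r => Lam y (nest_Lam r) end.

Definition kappa (w : seq B) : C :=
  match w with a :: (_ :: _) as l => phi (a * nest_Lam l) | _ => 0 end.

Lemma kappa_cons (a : B) (l : seq B) : l != [::] -> kappa (a :: l) = phi (a * nest_Lam l).
Proof. by case: l. Qed.

Lemma nest_Lam_rcons (mid : seq B) (y : B) : nest_Lam (rcons mid y) = foldr Lam y mid.
Proof. by elim: mid => //= a [|b mid] <-. Qed.

Lemma nest_Lam_merge (L : seq B) (u t : B) :
  nest_Lam (L ++ [:: u; t]) = nest_Lam (L ++ [:: Lam u t]).
Proof. by elim: L => //= a [|b L] ->. Qed.

Lemma kappa_merge (L : seq B) (u t : B) :
  L != [::] -> kappa (L ++ [:: u; t]) = kappa (L ++ [:: Lam u t]).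
Proof.
case: L => [|a L] // _.
by rewrite !cat_cons !kappa_cons ?nest_Lam_merge //; case: L.
Qed.

Hypothesis phi_linear : forall a x y, phi (a *: x + y) = a * phi x + phi y.
Hypothesis Lam_linear_r : forall a x y z, Lam z (a *: x + y) = a *: Lam z x + Lam z y.

Lemma nest_Lam_scale_last (L : seq B) (c : C) (y : B) :
  nest_Lam (rcons L (c *: y)) = c *: nest_Lam (rcons L y).
Proof.
have Lam_scale z := linear_scale (fun a x y => Lam_linear_r a x y z).
by elim: L => //= a [|b L] IH; rewrite -Lam_scale // -IH.
Qed.

Lemma kappa_scale_last (L : seq B) (c : C) (y : B) :
  kappa (rcons L (c *: y)) = c * kappa (rcons L y).
Proof.
case: L => [|a L]; first by rewrite mulr0.
have nil_rcons z : rcons L z != [::] by case: L.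
rewrite !rcons_cons !kappa_cons // nest_Lam_scale_last -scalerAr.
exact: (linear_scale (phi_linear : forall a x y, (phi : B -> C^o) (a *: x + y) = _)).
Qed.

End BlockWeight.

Section PartitionRelations.
Variable N : nat.
Implicit Types (P Q : {set {set 'I_N}}) (R : rel 'I_N) (i j a b c d : 'I_N).
Local Open Scope nat_scope.

Definition same_block P : rel 'I_N := fun i j => pblock P i == pblock P j.

Definition nc_rel R : bool :=
  [forall a : 'I_N, forall b : 'I_N, forall c : 'I_N, forall d : 'I_N,
    [&& a < b, b < c, c < d, R a c & R b d] ==> R a b].

Definition no_singleton R : bool := [forall i : 'I_N, exists j : 'I_N, (j != i) && R i j].

Definition separated_tail m R : bool :=
  [forall i : 'I_N, forall j : 'I_N, [&& N - m <= i, N - m <= j & R i j] ==> (i == j)].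

Definition linked_next p R : bool :=
  [exists i : 'I_N, exists j : 'I_N, [&& i == p :> nat, j == p.+1 :> nat & R i j]].

Definition linked_far p R : bool :=
  [exists i : 'I_N, exists j : 'I_N, [&& i == p :> nat, j != p :> nat, j != p.+1 :> nat & R i j]].

Definition admissible m R : bool := [&& nc_rel R, no_singleton R & separated_tail m R].

Lemma nc_relP R :
  reflect (forall a b c d, a < b -> b < c -> c < d -> R a c -> R b d -> R a b) (nc_rel R).
Proof.
apply: (iffP forallP) => [H a b c d ab bc cd ac bd | H a].
  by move: (H a) => /forallP/(_ b)/forallP/(_ c)/forallP/(_ d)/implyP; apply; apply/and5P.
do 3![apply/forallP => ?]; apply/implyP => /and5P[]; exact: H.
Qed.

Lemma no_singletonP R : reflect (forall i, exists2 j, j != i & R i j) (no_singleton R).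
Proof.
apply: (iffP forallP) => H i; first by have /existsP[j /andP[]] := H i; exists j.
by have [j ? ?] := H i; apply/existsP; exists j; apply/andP.
Qed.

Lemma separated_tailP m R :
  reflect (forall i j, N - m <= i -> N - m <= j -> R i j -> i = j) (separated_tail m R).
Proof.
apply: (iffP forallP) => H i.
  by move=> j hi hj hR; apply/eqP; move: (H i) => /forallP/(_ j)/implyP; apply; apply/and3P.
by apply/forallP => j; apply/implyP => /and3P[? ? ?]; apply/eqP; apply: H.
Qed.

Lemma linked_nextP p R :
  reflect (exists i j, [/\ i = p :> nat, j = p.+1 :> nat & R i j]) (linked_next p R).
Proof.
apply: (iffP existsP) => [[i /existsP[j /and3P[/eqP ? /eqP ? ?]]] | [i [j [? ? ?]]]].
  by exists i, j.
by exists i; apply/existsP; exists j; apply/and3P; split=> //; apply/eqP.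
Qed.

Lemma linked_farP p R :
  reflect (exists i j, [/\ i = p :> nat, j <> p :> nat, j <> p.+1 :> nat & R i j]) (linked_far p R).
Proof.
apply: (iffP existsP) => [[i /existsP[j /and4P[/eqP ? /eqP ? /eqP ? ?]]] | [i [j [? ? ? ?]]]].
  by exists i, j.
by exists i; apply/existsP; exists j; apply/and4P; split=> //; apply/eqP.
Qed.

Definition kerpart (T : eqType) (f : 'I_N -> T) : {set {set 'I_N}} :=
  preim_partition f [set: 'I_N].

Lemma kerpart_partition (T : eqType) (f : 'I_N -> T) : partition (kerpart f) [set: 'I_N].
Proof. exact: preim_partitionP. Qed.

Lemma same_block_kerpart (T : eqType) (f : 'I_N -> T) i j :
  same_block (kerpart f) i j = (f i == f j).
Proof.
have /and3P[/eqP cov tI _] := kerpart_partition f.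
rewrite /same_block eq_pblock // ?cov ?inE //.
rewrite /kerpart /preim_partition pblock_equivalence_partition ?inE //.
by move=> x y z _ _ _; split=> // /eqP ->.
Qed.

Lemma eq_kerpart (T T' : eqType) (f : 'I_N -> T) (g : 'I_N -> T') :
  (forall i j, (f i == f j) = (g i == g j)) -> kerpart f = kerpart g.
Proof.
move=> fg; apply: eq_imset => i.
by apply/setP => j; rewrite !inE fg.
Qed.

Lemma eq_partition P Q :
    partition P [set: 'I_N] -> partition Q [set: 'I_N] ->
  (forall i j, same_block P i j = same_block Q i j) -> P = Q.
Proof.
move=> partP partQ PQ.
by rewrite -(preim_partition_pblock partP) -(preim_partition_pblock partQ); apply: eq_kerpart.
Qed.

Lemma same_block_mem P V a b :
  partition P [set: 'I_N] -> V \in P -> a \in V -> b \in V -> same_block P a b.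
Proof.
by move=> /and3P[_ tI _] VP aV bV; rewrite /same_block (def_pblock tI VP aV) (def_pblock tI VP bV).
Qed.

Lemma same_block_pblock P a b :
  partition P [set: 'I_N] -> same_block P a b -> b \in pblock P a.
Proof. by move=> /and3P[/eqP cov tI _]; rewrite /same_block eq_pblock // cov inE. Qed.

Lemma NCpartE P : NCpart P = partition P [set: 'I_N] && nc_rel (same_block P).
Proof.
rewrite /NCpart; case partP: (partition P _) => //=.
have /and3P[/eqP cov tI _] := partP.
have inP x : x \in pblock P x by rewrite mem_pblock cov inE.
apply/idP/nc_relP => [nc a b c d ab bc cd ac bd | nc].
  apply: contraNT nc => nab; apply/existsP; exists (pblock P a).
  rewrite pblock_mem ?cov ?inE //=; apply/existsP; exists (pblock P b).
  rewrite pblock_mem ?cov ?inE //=; apply/existsP; exists a; apply/existsP; exists b.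
  apply/existsP; exists c; apply/existsP; exists d; rewrite nab ab bc cd !inP /=.
  by move: ac bd; rewrite /same_block !eq_pblock ?cov ?inE // => -> ->.
apply/negP => /existsP[V /andP[VP /existsP[W /andP[WP]]]].
move=> /existsP[a /existsP[b /existsP[c /existsP[d]]]] /and5P[VW ab bc cd /and4P[aV cV bW dW]].
have := nc a b c d ab bc cd (same_block_mem partP VP aV cV) (same_block_mem partP WP bW dW).
by rewrite /same_block (def_pblock tI VP aV) (def_pblock tI WP bW) (negbTE VW).
Qed.

Lemma separated_tail_small m R : m <= 1 -> separated_tail m R.
Proof.
move=> m1; apply/separated_tailP => i j hi hj _; apply: ord_inj.
by have := ltn_ord i; have := ltn_ord j; lia.
Qed.

Lemma partition_with_full_block P :
  partition P [set: 'I_N] -> [set: 'I_N] \in P -> P = [set [set: 'I_N]].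
Proof.
move=> /and3P[_ tI nP0] TP; apply/eqP; rewrite eqEsubset sub1set TP andbT.
apply/subsetP => W WP; rewrite inE.
have /set0Pn[y yW] : W != set0 by apply: contraNneq nP0 => <-.
by rewrite -(def_pblock tI WP yW) (def_pblock tI TP (in_setT y)).
Qed.

Lemma NCpart_full_block : 0 < N -> NCpart [set [set: 'I_N]].
Proof.
move=> N_gt0; rewrite NCpartE; apply/andP; split.
  rewrite /partition cover1 eqxx trivIset1 inE eq_sym; apply/set0Pn.
  by exists (Ordinal N_gt0); rewrite inE.
apply/nc_relP => a b *; apply/eqP.
by rewrite !(def_pblock (trivIset1 _) (set11 _) (in_setT _)).
Qed.

End PartitionRelations.

Definition pull_partition (N M : nat) (rho : 'I_N -> option 'I_M) (P' : {set {set 'I_M}}) :=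
  kerpart (fun i => omap (pblock P') (rho i)).

(* The partitions of 'I_N satisfying CN are exactly the pullbacks along rho of
   the partitions of 'I_M satisfying CM. *)
Lemma reindex_partition_sum (K : nmodType) (N M : nat) (sect : 'I_M -> 'I_N)
    (rho : 'I_N -> option 'I_M) (CN : rel 'I_N -> bool) (CM : rel 'I_M -> bool)
    (F : {set {set 'I_N}} -> K) :
  (forall a, rho (sect a) = Some a) ->
  (forall P, partition P [set: 'I_N] -> CN (same_block P) -> forall i j,
     same_block P i j = (omap (pblock P \o sect) (rho i) == omap (pblock P \o sect) (rho j))) ->
  (forall (f : 'I_M -> {set 'I_M}) (R : rel 'I_N),
     (forall i j, R i j = (omap f (rho i) == omap f (rho j))) ->
     CN R = CM (fun a b => f a == f b)) ->
  \sum_(P | partition P [set: 'I_N] && CN (same_block P)) F P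
  = \sum_(P' | partition P' [set: 'I_M] && CM (same_block P')) F (pull_partition rho P').
Proof.
move=> rho_sect P_pulled CNM.
pose restrict P := kerpart (fun a => pblock P (sect a)).
have CN_pull P' : CN (same_block (pull_partition rho P')) = CM (same_block P').
  by apply: CNM => i j; rewrite same_block_kerpart.
rewrite (reindex_onto (pull_partition rho) restrict) => [|P /andP[partP CNP]].
  apply: eq_bigl => P'; rewrite kerpart_partition CN_pull /=.
  case partP': (partition P' _); last first.
    by apply/negbTE; apply: contraFN partP' => /andP[_ /eqP <-]; apply: kerpart_partition.
  case: (CM (same_block P')) => //=; apply/eqP; apply: eq_partition => //.
    exact: kerpart_partition.
  move=> a b; rewrite same_block_kerpart.
  have := same_block_kerpart (fun i => omap (pblock P') (rho i)) (sect a) (sect b).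
  by rewrite /same_block => ->; rewrite !rho_sect.
apply: eq_partition => //; first exact: kerpart_partition.
move=> i j; rewrite same_block_kerpart (P_pulled P partP CNP i j).
case: (rho i) => [a|]; case: (rho j) => [b|] //=.
by have := same_block_kerpart (fun a => pblock P (sect a)) a b; rewrite /same_block.
Qed.

Section IndexMaps.
Local Open Scope nat_scope.

Lemma nc_rel_pullback (N M : nat) (rho : 'I_N -> 'I_M) (sect : 'I_M -> 'I_N)
    (T : eqType) (f : 'I_M -> T) (R : rel 'I_N) :
  cancel sect rho -> (forall a b : 'I_M, a < b -> sect a < sect b) ->
  (forall i j : 'I_N, i < j -> rho i <= rho j) ->
  (forall i j, R i j = (f (rho i) == f (rho j))) ->
  nc_rel R = nc_rel (fun a b => f a == f b).
Proof.
move=> sectK sect_mono rho_mono HR.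
apply/nc_relP/nc_relP => nc a b c d ab bc cd.
  have := nc _ _ _ _ (sect_mono _ _ ab) (sect_mono _ _ bc) (sect_mono _ _ cd).
  by rewrite !HR !sectK.
rewrite !HR => /eqP fac /eqP fbd.
case: (eqVneq (rho a) (rho b)) => [-> //|nab].
case: (eqVneq (rho b) (rho c)) => [eb|nbc]; first by rewrite fac eb.
case: (eqVneq (rho c) (rho d)) => [ec|ncd]; first by rewrite fac fbd ec.
have lt_of_le x y : x <= y -> x != y -> x < y by rewrite ltn_neqAle => -> ->.
apply: nc; rewrite ?fac ?fbd //; apply: lt_of_le; rewrite ?rho_mono //.
Qed.

Variables p k : nat.

(* [collapse] identifies the points p and p+1 of 'I_(p + k).+2 and [excise]
   deletes them; [collapse_sect] and [excise_sect] are right inverses. *)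
Definition collapse (i : 'I_(p + k).+2) : 'I_(p + k).+1 :=
  inord (if i <= p then (i : nat) else (i : nat).-1).

Definition collapse_sect (a : 'I_(p + k).+1) : 'I_(p + k).+2 :=
  inord (if a < p then (a : nat) else (a : nat).+1).

Lemma val_collapse i : (collapse i : nat) = if i <= p then (i : nat) else (i : nat).-1.
Proof. by rewrite inordK //; have := ltn_ord i; case: ifP => /=; lia. Qed.

Lemma val_collapse_sect a : (collapse_sect a : nat) = if a < p then (a : nat) else (a : nat).+1.
Proof. by rewrite inordK //; have := ltn_ord a; case: ifP => /=; lia. Qed.

Lemma collapse_sectK : cancel collapse_sect collapse.
Proof.
move=> a; apply: ord_inj; rewrite val_collapse val_collapse_sect.
by case: (ltnP a p) => h; rewrite ?h; case: ifP; lia.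
Qed.

Lemma collapse_sect_collapse i :
  (collapse_sect (collapse i) : nat) = if i == p :> nat then p.+1 else i.
Proof.
rewrite val_collapse_sect; have := val_collapse i; move: (collapse i : nat) => c ->.
by do 3!case: ifP; lia.
Qed.

Lemma pblock_collapse_sect (P : {set {set 'I_(p + k).+2}}) :
  linked_next p (same_block P) -> forall i, pblock P (collapse_sect (collapse i)) = pblock P i.
Proof.
move=> /linked_nextP[i0 [j0 [i0p j0p Ri0j0]]] i.
have := collapse_sect_collapse i; case: eqP => [ip | _] sect_i; last by rewrite (ord_inj sect_i).
have -> : collapse_sect (collapse i) = j0 by apply: ord_inj; rewrite sect_i j0p.
by rewrite -(eqP Ri0j0); congr pblock; apply: ord_inj; rewrite i0p ip.
Qed.

Section Collapse.
Variables (T : eqType) (f : 'I_(p + k).+1 -> T) (R : rel 'I_(p + k).+2).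
Hypothesis HR : forall i j, R i j = (f (collapse i) == f (collapse j)).

Lemma nc_rel_collapse : nc_rel R = nc_rel (fun a b => f a == f b).
Proof.
apply: nc_rel_pullback HR; first exact: collapse_sectK.
  by move=> a b; rewrite !val_collapse_sect; do 2!case: ifP; lia.
by move=> i j; rewrite !val_collapse; do 2!case: ifP; lia.
Qed.

Lemma linked_next_collapse : linked_next p R.
Proof.
apply/linked_nextP; exists (inord p), (inord p.+1); rewrite HR !inordK; try lia.
split=> //; apply/eqP; congr (f _); apply: ord_inj.
by rewrite !val_collapse !inordK ?leqnn ?ltnn /=; lia.
Qed.

Lemma no_singleton_collapse :
  no_singleton R && linked_far p R = no_singleton (fun a b => f a == f b).
Proof.
have collapse_p : (collapse (inord p) : nat) = p by rewrite val_collapse inordK ?leqnn; lia.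
apply/andP/no_singletonP => [[/no_singletonP ns /linked_farP far] a | ns].
  case: (eqVneq (a : nat) p) => [ap|anp].
    have [i [j [ip jp jp1 Rij]]] := far.
    have -> : a = collapse i by apply: ord_inj; rewrite ap val_collapse ip leqnn.
    exists (collapse j); last by rewrite -HR.
    by apply/eqP => /(congr1 (@nat_of_ord _)); rewrite !val_collapse ip leqnn; case: ifP; lia.
  have [j nj Rj] := ns (collapse_sect a); rewrite HR collapse_sectK in Rj.
  exists (collapse j) => //; apply: contra_neq nj => ja; apply: ord_inj.
  by move: anp; rewrite val_collapse_sect -ja val_collapse; do 2!case: ifP; lia.
split.
  apply/no_singletonP => i; have [b nb fb] := ns (collapse i).
  exists (collapse_sect b); last by rewrite HR collapse_sectK.
  by apply: contraNneq nb => <-; rewrite collapse_sectK.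
apply/linked_farP; have [b nb fb] := ns (collapse (inord p)).
exists (inord p), (collapse_sect b); rewrite HR collapse_sectK inordK; last by lia.
split=> //; move: nb => /eqP nb; rewrite val_collapse_sect => hb; apply: nb;
  apply: ord_inj; rewrite collapse_p; move: hb; case: ifP; lia.
Qed.

Lemma separated_tail_collapse :
  separated_tail k.+1 R = separated_tail k.+1 (fun a b => f a == f b).
Proof.
apply/separated_tailP/separated_tailP => sd.
  move=> a b ha hb fab; rewrite -(collapse_sectK a) -(collapse_sectK b); congr collapse.
  by apply: sd; rewrite ?HR ?collapse_sectK // val_collapse_sect; case: ifP; lia.
move=> i j hi hj; rewrite HR => /sd /(congr1 (@nat_of_ord _)); rewrite !val_collapse => eq_ij.
by apply: ord_inj; move: eq_ij; do 2!case: ifP; lia.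
Qed.

Lemma admissible_collapse :
  [&& admissible k.+1 R, linked_next p R & linked_far p R] =
  admissible k.+1 (fun a b => f a == f b).
Proof.
rewrite /admissible linked_next_collapse -no_singleton_collapse nc_rel_collapse.
rewrite -separated_tail_collapse.
by case: (nc_rel _) (no_singleton R) (separated_tail _ R) (linked_far p R) => [] [] [] [].
Qed.

End Collapse.

Definition excise (i : 'I_(p + k).+2) : option 'I_(p + k) :=
  if p <= i <= p.+1 then None else insub (if i < p then (i : nat) else i - 2).

Definition excise_sect (a : 'I_(p + k)) : 'I_(p + k).+2 :=
  inord (if a < p then (a : nat) else a.+2).

Lemma val_excise_sect a : (excise_sect a : nat) = if a < p then (a : nat) else a.+2.
Proof. by rewrite inordK //; have := ltn_ord a; case: ifP; lia. Qed.

Variant excise_spec (i : 'I_(p + k).+2) : option 'I_(p + k) -> Type :=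
  | ExcisePair of p <= i <= p.+1 : excise_spec i None
  | ExciseLow (a : 'I_(p + k)) of i < p & (a : nat) = i & excise_sect a = i :
      excise_spec i (Some a)
  | ExciseHigh (a : 'I_(p + k)) of p.+1 < i & (a : nat) = i - 2 & excise_sect a = i :
      excise_spec i (Some a).

Lemma exciseP i : excise_spec i (excise i).
Proof.
rewrite /excise; case: ifP => pair_i; first by constructor.
case: insubP => [a _ va|] /=; last by have := ltn_ord i; case: ifP => ? ? ?; exfalso; lia.
change ((a : nat) = (if i < p then (i : nat) else i - 2)) in va.
have sect_a : excise_sect a = i.
  by apply: ord_inj; move: va; rewrite val_excise_sect; do 2!case: ifP; lia.
by case: ifP va => ip va; [apply: ExciseLow | apply: ExciseHigh] => //; lia.
Qed.

Lemma excise_pair (i : 'I_(p + k).+2) : p <= i <= p.+1 -> excise i = None.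
Proof. by rewrite /excise => ->. Qed.

Lemma excise_sectK a : excise (excise_sect a) = Some a.
Proof.
have := val_excise_sect a.
case: exciseP => [pair_a|b pb vb _|b pb vb _] va.
  by exfalso; move: pair_a; rewrite va; case: ifP; lia.
all: by congr Some; apply: ord_inj; move: pb vb; rewrite va; case: ifP; lia.
Qed.

Lemma excise_cases (i : 'I_(p + k).+2) :
  p <= i <= p.+1 \/ exists2 a, excise i = Some a & excise_sect a = i.
Proof. by case: exciseP => [|a _ _|a _ _]; [left | right; exists a | right; exists a]. Qed.

Lemma same_block_excise (P : {set {set 'I_(p + k).+2}}) :
    linked_next p (same_block P) -> ~~ linked_far p (same_block P) ->
  forall i j, same_block P i j
    = (omap (pblock P \o excise_sect) (excise i) == omap (pblock P \o excise_sect) (excise j)).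
Proof.
move=> /linked_nextP[i0 [j0 [i0p j0p Ri0j0]]] /linked_farP not_far i j.
have pair_linked (l : 'I_(p + k).+2) : p <= l <= p.+1 -> pblock P l = pblock P i0.
  move=> pl; case: (eqVneq (l : nat) p) => [lp|]; first by congr pblock; apply: ord_inj; rewrite lp.
  by move=> lp; rewrite (eqP Ri0j0); congr pblock; apply: ord_inj; lia.
have unlinked (l l' : 'I_(p + k).+2) a :
    p <= l <= p.+1 -> excise l' = Some a -> ~~ same_block P l l'.
  move=> pl el'; apply/negP => Rll'; apply: not_far; exists i0, l'; split=> //.
  - by move=> l'p; rewrite excise_pair // in el'; lia.
  - by move=> l'p; rewrite excise_pair // in el'; lia.
  by rewrite /same_block -(pair_linked l pl) (eqP Rll').
have [pi|[a ea sa]] := excise_cases i; have [pj|[b eb sb]] := excise_cases j.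
- rewrite (excise_pair pi) (excise_pair pj) /same_block.
  by rewrite (pair_linked i pi) (pair_linked j pj) eqxx.
- by rewrite (excise_pair pi) eb; apply/negbTE; apply: unlinked eb.
- by rewrite (excise_pair pj) ea /same_block eq_sym; apply/negbTE; apply: unlinked ea.
- by rewrite ea eb /= (inj_eq Some_inj) sa sb.
Qed.

Section Excise.
Variables (T : eqType) (f : 'I_(p + k) -> T) (R : rel 'I_(p + k).+2).
Hypothesis HR : forall i j, R i j = (omap f (excise i) == omap f (excise j)).

Lemma nc_rel_excise : nc_rel R = nc_rel (fun a b => f a == f b).
Proof.
apply/nc_relP/nc_relP => nc a b c d ab bc cd.
  have sect_mono (x y : 'I_(p + k)) : x < y -> excise_sect x < excise_sect y.
    by rewrite !val_excise_sect; do 2!case: ifP; lia.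
  have := nc _ _ _ _ (sect_mono _ _ ab) (sect_mono _ _ bc) (sect_mono _ _ cd).
  by rewrite !HR !excise_sectK.
rewrite !HR; case: (exciseP a) => [?|A ? vA _|A ? vA _];
  case: (exciseP c) => [?|C' ? vC _|C' ? vC _]; rewrite //=; try lia; move=> fac.
all: case: (exciseP b) => [?|B' ? vB _|B' ? vB _];
  case: (exciseP d) => [?|D ? vD _|D ? vD _]; rewrite //=; try lia; move=> fbd.
all: by apply: (nc A B' C' D) => //; lia.
Qed.

Lemma linked_next_excise : linked_next p R.
Proof.
apply/linked_nextP; exists (inord p), (inord p.+1); rewrite HR !inordK; try lia.
by rewrite !excise_pair ?inordK //; lia.
Qed.

Lemma linked_far_excise : ~~ linked_far p R.
Proof.
apply/linked_farP => -[i [j [ip jp jp1]]]; rewrite HR excise_pair; last by lia.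
by case: exciseP => //; lia.
Qed.

Lemma no_singleton_excise : no_singleton R = no_singleton (fun a b => f a == f b).
Proof.
apply/no_singletonP/no_singletonP => ns a.
  have [j nj] := ns (excise_sect a); rewrite HR excise_sectK.
  case: exciseP nj => [//|b _ _ <-|b _ _ <-] nj fab; exists b => //;
    by apply: contra_neq nj => ->.
have [pair_a|[A eA sA]] := excise_cases a.
  exists (inord (if a == p :> nat then p.+1 else p)).
    by apply/eqP => /(congr1 (@nat_of_ord _)); rewrite inordK; case: eqP; lia.
  by rewrite HR !excise_pair ?inordK //; case: eqP; lia.
have [b nb fb] := ns A; exists (excise_sect b).
  by rewrite -sA; apply: contra_neq nb => /(congr1 excise); rewrite !excise_sectK => -[].
by rewrite HR eA excise_sectK.
Qed.

Lemma separated_tail_excise :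
  separated_tail k.+1 R = separated_tail k (fun a b => f a == f b).
Proof.
apply/separated_tailP/separated_tailP => sd.
  move=> a b ha hb fab; apply: Some_inj; rewrite -!excise_sectK; congr excise.
  by apply: sd; rewrite ?HR ?excise_sectK ?val_excise_sect //; case: ifP; lia.
move=> i j hi hj; rewrite HR.
case: (exciseP i) => [?|a ? ? sa|a ? ? sa]; case: (exciseP j) => [?|b ? ? sb|b ? ? sb];
  rewrite //=; try lia.
  by move=> _; apply: ord_inj; lia.
by move=> /sd eq_ab; rewrite -sa -sb eq_ab //; lia.
Qed.

Lemma admissible_excise :
  [&& admissible k.+1 R, linked_next p R & ~~ linked_far p R] =
  admissible k (fun a b => f a == f b).
Proof.
rewrite /admissible linked_next_excise linked_far_excise nc_rel_excise no_singleton_excise.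
by rewrite separated_tail_excise !andbT.
Qed.

End Excise.

Section Unlinked.
Variables (T : eqType) (g : 'I_(p + k).+2 -> T) (R : rel 'I_(p + k).+2).
Hypothesis HR : forall i j, R i j = (g i == g j).

Lemma unlinked_next_no_later (l m : 'I_(p + k).+2) :
    admissible k.+1 R -> ~~ linked_next p R ->
  l = p :> nat -> p < m -> ~~ R l m.
Proof.
have Rsym i j : R i j = R j i by rewrite !HR eq_sym.
move=> /and3P[nc ns /separated_tailP sd] /linked_nextP unlinked lp pm; apply/negP => Rlm.
have p1_lt : p.+1 < (p + k).+2 by lia.
pose q := Ordinal p1_lt.
have qm : q < m.
  by rewrite ltn_neqAle pm andbT; apply/eqP => qm; apply: unlinked; exists l, m.
have [a nqa Rqa] := no_singletonP R ns q.
case: (ltngtP a p) => [ap|pa|ap].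
- have Raq : R a q by rewrite Rsym.
  have Ral : R a l by apply: (nc_relP R nc a l q m) => //=; lia.
  by apply: unlinked; exists l, q; split=> //; move: Ral Rqa; rewrite !HR => /eqP <- /eqP ->.
- have eq_qa : q = a by apply: sd => //=; lia.
  by rewrite eq_qa eqxx in nqa.
- by apply: unlinked; exists a, q; rewrite Rsym.
Qed.

Lemma admissible_unlinked_next :
  admissible k.+1 R && ~~ linked_next p R = admissible k.+2 R.
Proof.
have Rsym i j : R i j = R j i by rewrite !HR eq_sym.
apply/andP/and3P => [[adm unlinked] | [nc ns /separated_tailP sd]].
  have /and3P[nc ns /separated_tailP sd] := adm.
  split=> //; apply/separated_tailP => i j hi hj Rij.
  have [pi|ip] := ltnP p i; have [pj|jp] := ltnP p j.
  - by apply: sd => //; lia.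
  - have jp' : j = p :> nat by lia.
    by move: Rij; rewrite Rsym (negbTE (unlinked_next_no_later adm unlinked jp' pi)).
  - have ip' : i = p :> nat by lia.
    by move: Rij; rewrite (negbTE (unlinked_next_no_later adm unlinked ip' pj)).
  - by apply: ord_inj; lia.
split; [apply/and3P; split=> // | apply/linked_nextP => -[i [j [ip jp]]]].
  by apply/separated_tailP => i j hi hj; apply: sd; lia.
move=> Rij; have eq_ij : i = j by apply: sd => //; lia.
by move: ip jp; rewrite eq_ij; lia.
Qed.

End Unlinked.
End IndexMaps.

Lemma mask_skip_pair (T : Type) (m1 m2 : bitseq) (s1 s2 : seq T) (u t : T) :
    size m1 = size s1 ->
  mask (m1 ++ [:: false, false & m2]) (s1 ++ [:: u, t & s2]) = mask (m1 ++ m2) (s1 ++ s2).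
Proof. by move=> size_m1; rewrite !mask_cat. Qed.

Section Indicators.
Local Open Scope nat_scope.

Definition nat_in (N : nat) (V : {set 'I_N}) (n : nat) : bool := [exists i in V, i == n :> nat].

Lemma nat_in_ord (N : nat) (V : {set 'I_N}) (a : 'I_N) : nat_in V a = (a \in V).
Proof.
apply/existsP/idP => [[i /andP[iV /eqP ia]] | aV]; last by exists a; rewrite aV /=.
by rewrite -(ord_inj ia).
Qed.

Definition indicator (N : nat) (V : {set 'I_N}) : bitseq := [seq i \in V | i <- enum 'I_N].

Lemma indicatorE (N : nat) (V : {set 'I_N}) (g : nat -> bool) :
  (forall i : 'I_N, g i = (i \in V)) -> indicator V = map g (iota 0 N).
Proof. by move=> gV; rewrite -val_enum_ord -map_comp; apply: eq_map => i /=; rewrite gV. Qed.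

Lemma indicator_nat_in (N : nat) (V : {set 'I_N}) : indicator V = map (nat_in V) (iota 0 N).
Proof. by apply: indicatorE => i; rewrite nat_in_ord. Qed.

Variables p k : nat.

Lemma indicator_split_at (V : {set 'I_(p + k).+1}) :
  indicator V = map (nat_in V) (iota 0 p) ++ nat_in V p :: map (nat_in V) (iota p.+1 k).
Proof.
rewrite indicator_nat_in.
have -> : iota 0 (p + k).+1 = iota 0 p ++ p :: iota p.+1 k by rewrite -addnS iotaD.
by rewrite map_cat.
Qed.

Lemma iota_split_pair : iota 0 (p + k).+2 = iota 0 p ++ [:: p, p.+1 & iota p.+2 k].
Proof. by rewrite -!addnS iotaD. Qed.

Lemma indicator_collapse (V : {set 'I_(p + k).+1}) :
  indicator [set i | @collapse p k i \in V]
  = map (nat_in V) (iota 0 p) ++ [:: nat_in V p, nat_in V p & map (nat_in V) (iota p.+1 k)].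
Proof.
rewrite (@indicatorE _ _ (fun n => nat_in V (if n <= p then n else n.-1))); last first.
  by move=> i; rewrite inE -nat_in_ord val_collapse.
rewrite iota_split_pair map_cat /= leqnn ltnn (iotaDl 1 p.+1) -map_comp.
congr (_ ++ [:: _, _ & _]); apply/eq_in_map => n; rewrite mem_iota /= => range.
  by case: ifP => // h; exfalso; lia.
by case: ifP => // h; exfalso; lia.
Qed.

Lemma indicator_excise (V : {set 'I_(p + k)}) :
  indicator [set i | if @excise p k i is Some a then a \in V else false]
  = map (nat_in V) (iota 0 p) ++ [:: false, false & map (nat_in V) (iota p k)].
Proof.
rewrite (@indicatorE _ _ (fun n => if p <= n <= p.+1 then false
                                   else nat_in V (if n < p then n else n - 2))); last first.
  move=> i; rewrite inE; case: exciseP => [-> //|a ip va _|a ip va _];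
    rewrite -nat_in_ord va ifF; try lia.
    by rewrite ip.
  by rewrite ifN //; lia.
rewrite iota_split_pair map_cat /= !leqnn ltnn leqnSn /= (iotaDl 2 p) -map_comp.
congr (_ ++ [:: _, _ & _]); apply/eq_in_map => n; rewrite mem_iota /= => range.
  by rewrite ifF ?ifT //; lia.
by rewrite ifF ?ifF; [congr nat_in | |]; lia.
Qed.

Lemma indicator_excised_pair :
  indicator [set i | @excise p k i == None] = nseq p false ++ [:: true, true & nseq k false].
Proof.
rewrite (@indicatorE _ _ (fun n => p <= n <= p.+1)); last first.
  by move=> i; rewrite inE; case: exciseP => [-> //|a ? ? _|a ? ? _]; apply/negbTE; lia.
rewrite iota_split_pair map_cat /= !leqnn leqnSn /=.
congr (_ ++ [:: _, _ & _]); apply: (@eq_from_nth _ false);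
  rewrite ?size_map ?size_iota ?size_nseq // => n hn.
all: by rewrite nth_nseq (nth_map 0) ?size_iota // nth_iota //; case: ifP; lia.
Qed.

Lemma indicator_split_pair (V : {set 'I_(p + k)}) :
  indicator V = map (nat_in V) (iota 0 p) ++ map (nat_in V) (iota p k).
Proof. by rewrite indicator_nat_in iotaD map_cat. Qed.

End Indicators.

Section TailBlocks.
Variables (N m : nat) (P : {set {set 'I_N}}) (V : {set 'I_N}) (q : 'I_N).
Hypotheses (partP : partition P [set: 'I_N]) (VP : V \in P) (qV : q \in V).
Hypothesis q_open : (N - m <= q)%N.

Lemma tail_block_last : separated_tail m (same_block P) -> forall n, (q < n)%N -> ~~ nat_in V n.
Proof.
move=> /separated_tailP sd n qn; apply/existsP => -[j /andP[jV /eqP jn]].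
have q_j : q = j by apply: sd => //; [lia | exact: same_block_mem partP VP qV jV].
by move: qn; rewrite -jn -q_j ltnn.
Qed.

Lemma tail_block_before : admissible m (same_block P) -> exists2 n, (n < q)%N & nat_in V n.
Proof.
case/and3P => _ /no_singletonP ns sd; have [j nj qj] := ns q.
have /and3P[_ tI _] := partP.
have jV : j \in V by move: (same_block_pblock partP qj); rewrite (def_pblock tI VP qV).
exists j; last by rewrite nat_in_ord.
rewrite ltn_neqAle (inj_eq (@ord_inj N)) nj leqNgt /=; apply/negP => q_lt_j.
by move: (tail_block_last sd q_lt_j); rewrite nat_in_ord jV.
Qed.

End TailBlocks.

Lemma pull_partition_some (N M : nat) (rho : 'I_N -> 'I_M) (sect : 'I_M -> 'I_N)
    (P' : {set {set 'I_M}}) :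
  cancel sect rho -> partition P' [set: 'I_M] ->
  pull_partition (fun i => Some (rho i)) P'
  = [set [set i | rho i \in V'] | V' : {set 'I_M} in P'].
Proof.
move=> sectK /and3P[/eqP cov tI nP0]; apply/setP => V.
apply/imsetP/imsetP => [[i _ ->] | [V' V'P' ->]].
  exists (pblock P' (rho i)); first by rewrite pblock_mem // cov inE.
  by apply/setP => j; rewrite !inE (inj_eq Some_inj) eq_pblock // cov inE.
have /set0Pn[a aV'] : V' != set0 by apply: contraNneq nP0 => <-.
exists (sect a) => //; apply/setP => j.
by rewrite !inE (inj_eq Some_inj) sectK eq_pblock ?cov ?inE // (def_pblock tI V'P' aV').
Qed.

Lemma pull_partition_none (N M : nat) (rho : 'I_N -> option 'I_M) (sect : 'I_M -> 'I_N)
    (P' : {set {set 'I_M}}) (i0 : 'I_N) :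
  (forall a, rho (sect a) = Some a) -> rho i0 = None -> partition P' [set: 'I_M] ->
  pull_partition rho P' = [set i | rho i == None] |:
     [set [set i | if rho i is Some a then a \in V' else false] | V' : {set 'I_M} in P'].
Proof.
move=> sectK rho_i0 /and3P[/eqP cov tI nP0]; apply/setP => V; rewrite in_setU1.
apply/imsetP/orP => [[i _ ->] | [/eqP -> | /imsetP[V' V'P' ->]]].
- case rho_i: (rho i) => [a|]; [right | left].
    apply/imsetP; exists (pblock P' a); first by rewrite pblock_mem // cov inE.
    apply/setP => j; rewrite !inE; case: (rho j) => [b|] //.
    by rewrite (inj_eq Some_inj) eq_pblock // cov inE.
  by apply/eqP/setP => j; rewrite !inE; case: (rho j).
- by exists i0 => //; apply/setP => j; rewrite !inE rho_i0; case: (rho j).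
have /set0Pn[a aV'] : V' != set0 by apply: contraNneq nP0 => <-.
exists (sect a) => //; apply/setP => j; rewrite !inE sectK; case: (rho j) => [b|] //.
by rewrite (inj_eq Some_inj) eq_pblock ?cov ?inE // (def_pblock tI V'P' aV').
Qed.

Section OpenMoments.
Variables (C : numClosedFieldType) (B : algType C) (phi : B -> C) (Lam : B -> B -> B).
Local Notation kappa := (kappa phi Lam).

Definition block_word (N : nat) (x : seq B) (V : {set 'I_N}) : seq B := mask (indicator V) x.

Lemma block_word_enum (N : nat) (x : seq B) (V : {set 'I_N}) :
  size x = N -> block_word x V = [seq nth 0 x i | i : 'I_N <- enum V].
Proof.
move=> size_x; have {1}-> : x = [seq nth 0 x i | i : 'I_N <- enum 'I_N].
  by rewrite (map_comp (nth 0 x)) val_enum_ord -size_x -/(mkseq _ _) mkseq_nth.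
by rewrite /block_word /indicator -map_mask -filter_mask enumT.
Qed.

Lemma size_block_word (N : nat) (x : seq B) (V : {set 'I_N}) :
  size x = N -> size (block_word x V) = #|V|.
Proof. by move=> size_x; rewrite block_word_enum // size_map cardE. Qed.

Lemma block_word_setT (x : seq B) : block_word x [set: 'I_(size x)] = x.
Proof.
rewrite block_word_enum // enum_setT -enumT (map_comp (nth 0 x)) val_enum_ord.
exact: mkseq_nth.
Qed.

Definition partition_weight (N : nat) (x : seq B) (P : {set {set 'I_N}}) : C :=
  \prod_(V in P) kappa (block_word x V).

Definition partition_sum (N : nat) (cond : rel 'I_N -> bool) (x : seq B) : C :=
  \sum_(P | partition P [set: 'I_N] && cond (same_block P)) partition_weight x P.

(* The last m points of 'I_N stand for letters that have been created but not
   yet annihilated, hence must lie in distinct blocks. *)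
Definition open_moment (N : nat) (x : seq B) (m : nat) : C :=
  partition_sum (@admissible N m) x.

Lemma kappa_mask_merge (m1 m2 : bitseq) (b : bool) (pre r : seq B) (u t : B) :
    size m1 = size pre -> size m2 = size r -> (b -> has id m1) -> (b -> ~~ has id m2) ->
  kappa (mask (m1 ++ [:: b, b & m2]) (pre ++ [:: u, t & r]))
  = kappa (mask (m1 ++ b :: m2) (pre ++ Lam u t :: r)).
Proof.
move=> size_m1 size_m2; rewrite !mask_cat //.
case: b => // /(_ isT) m1_true /(_ isT) m2_false /=.
have -> : mask m2 r = [::].
  by apply/size0nil; rewrite size_mask //; move: m2_false; rewrite has_count; lia.
apply: kappa_merge; rewrite -size_eq0 size_mask //; move: m1_true; rewrite has_count; lia.
Qed.

Section Reduction.
Variables (p k : nat) (pre r : seq B) (u t : B).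
Hypotheses (size_pre : size pre = p) (size_r : size r = k).

Lemma partition_sum_collapse :
  partition_sum (fun R : rel 'I_(p + k).+2 =>
                   [&& admissible k.+1 R, linked_next p R & linked_far p R])
                (pre ++ [:: u, t & r])
  = open_moment (p + k).+1 (pre ++ Lam u t :: r) k.+1.
Proof.
rewrite /open_moment /partition_sum (@reindex_partition_sum _ _ _ (@collapse_sect p k)
   (fun i => Some (collapse i))
   (fun R => [&& admissible k.+1 R, linked_next p R & linked_far p R]) (admissible k.+1)).
- apply: eq_bigr => P' /andP[partP' admP'].
  rewrite /partition_weight (pull_partition_some (@collapse_sectK p k) partP').
  rewrite big_imset; last first.
    move=> V1 V2 _ _ /setP eqV; apply/setP => a.
    by have := eqV (collapse_sect a); rewrite !inE collapse_sectK.
  apply: eq_bigr => V' V'P'; rewrite /block_word indicator_collapse indicator_split_at.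
  have /and3P[_ _ sd] := admP'.
  apply: kappa_mask_merge; rewrite ?size_map ?size_iota ?size_pre ?size_r //.
    move=> /existsP[q /andP[qV /eqP qp]].
    have q_open : ((p + k).+1 - k.+1 <= q)%N by lia.
    have [n nq nV] := tail_block_before partP' V'P' qV q_open admP'.
    by rewrite has_map; apply/hasP; exists n; rewrite ?mem_iota //= -qp.
  move=> /existsP[q /andP[qV /eqP qp]].
  have q_open : ((p + k).+1 - k.+1 <= q)%N by lia.
  rewrite has_map; apply/hasPn => n; rewrite mem_iota => /andP[pn _].
  by apply: (tail_block_last partP' V'P' qV q_open sd); rewrite qp.
- by move=> a; rewrite collapse_sectK.
- move=> P _ /and3P[_ linked _] i j.
  by rewrite /= !(pblock_collapse_sect linked) (inj_eq Some_inj).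
- move=> f R HR; apply: admissible_collapse => i j.
  by rewrite HR /= (inj_eq Some_inj).
Qed.

Lemma partition_sum_excise :
  partition_sum (fun R : rel 'I_(p + k).+2 =>
                   [&& admissible k.+1 R, linked_next p R & ~~ linked_far p R])
                (pre ++ [:: u, t & r])
  = phi (u * t) * open_moment (p + k) (pre ++ r) k.
Proof.
have p_lt : (p < (p + k).+2)%N by lia.
have excise_p : @excise p k (Ordinal p_lt) = None by rewrite excise_pair //=; lia.
rewrite /open_moment /partition_sum (@reindex_partition_sum _ _ _ (@excise_sect p k)
   (@excise p k) (fun R => [&& admissible k.+1 R, linked_next p R & ~~ linked_far p R])
   (admissible k)).
- rewrite mulr_sumr; apply: eq_bigr => P' /andP[partP' _].
  rewrite /partition_weight (pull_partition_none (@excise_sectK p k) excise_p partP').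
  rewrite big_setU1 /=; last first.
    apply/imsetP => -[V' _ /setP/(_ (Ordinal p_lt))]; rewrite !inE excise_p /=.
    by move=> /esym; rewrite eqxx.
  rewrite big_imset; last first.
    move=> V1 V2 _ _ /setP eqV; apply/setP => a.
    by have := eqV (excise_sect a); rewrite !inE excise_sectK.
  congr (_ * _).
    by rewrite /block_word indicator_excised_pair !mask_cat ?size_nseq //= !mask_false.
  apply: eq_bigr => V' _.
  rewrite /block_word indicator_excise indicator_split_pair.
  by rewrite mask_skip_pair ?size_map ?size_iota.
- by move=> a; rewrite excise_sectK.
- by move=> P _ /and3P[_ linked unlinked]; apply: same_block_excise.
- by move=> f R HR; apply: admissible_excise.
Qed.

End Reduction.
End OpenMoments.

Section OpenMomentFacts.
Variables (C : numClosedFieldType) (B : algType C) (phi : B -> C) (Lam : B -> B -> B).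
Hypothesis phi_linear : forall a x y, phi (a *: x + y) = a * phi x + phi y.
Hypothesis Lam_linear_r : forall a x y z, Lam z (a *: x + y) = a *: Lam z x + Lam z y.
Local Notation kappa := (kappa phi Lam).
Local Notation open_moment := (open_moment phi Lam).
Local Notation partition_weight := (partition_weight phi Lam).

Lemma kappa_mask_scale (m1 m2 : bitseq) (b : bool) (pre post : seq B) (c : C) (y : B) :
    size m1 = size pre -> size m2 = size post -> (b -> ~~ has id m2) ->
  kappa (mask (m1 ++ b :: m2) (pre ++ c *: y :: post))
  = (if b then c else 1) * kappa (mask (m1 ++ b :: m2) (pre ++ y :: post)).
Proof.
move=> size_m1 size_m2; rewrite !mask_cat //; case: b => [/(_ isT) m2_false|_] /=; last first.
  by rewrite mul1r.
have -> : mask m2 post = [::].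
  by apply/size0nil; rewrite size_mask //; move: m2_false; rewrite has_count; lia.
by rewrite !cats1 kappa_scale_last.
Qed.

Lemma open_moment_scale (pre post : seq B) (c : C) (y : B) (m : nat) : (size post < m)%N ->
  open_moment (size pre + size post).+1 (pre ++ c *: y :: post) m
  = c * open_moment (size pre + size post).+1 (pre ++ y :: post) m.
Proof.
move=> post_open; rewrite /open_moment /partition_sum mulr_sumr.
apply: eq_bigr => P /andP[partP admP]; have /and3P[/eqP cov tI _] := partP.
have q_lt : (size pre < (size pre + size post).+1)%N by lia.
pose q := Ordinal q_lt.
have q_open : ((size pre + size post).+1 - m <= q)%N by rewrite /=; lia.
have scale_block V : V \in P -> kappa (block_word (pre ++ c *: y :: post) V)
    = (if q \in V then c else 1) * kappa (block_word (pre ++ y :: post) V).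
  move=> VP; rewrite /block_word indicator_split_at -nat_in_ord.
  apply: kappa_mask_scale; rewrite ?size_map ?size_iota // => qV.
  have /and3P[_ _ sd] := admP.
  rewrite has_map; apply/hasPn => n; rewrite mem_iota => /andP[qn _].
  by apply: (tail_block_last partP VP _ q_open sd); rewrite -?nat_in_ord.
rewrite /partition_weight (eq_bigr _ scale_block) big_split /=; congr (_ * _).
have qP : pblock P q \in P by rewrite pblock_mem // cov inE.
rewrite (bigD1 _ qP) /= mem_pblock cov inE big1 ?mulr1 // => V /andP[VP nVq].
by case: ifP => // qV; move: nVq; rewrite (def_pblock tI VP qV) eqxx.
Qed.

Lemma open_moment_all_open (N : nat) (x : seq B) : open_moment N x N = (N == 0)%:R.
Proof.
case: N => [|N].
  have part0 : partition (set0 : {set {set 'I_0}}) [set: 'I_0].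
    apply/and3P; split; rewrite ?inE //; first by apply/eqP/setP => -[].
    by rewrite /trivIset /cover !big_set0 cards0.
  rewrite /open_moment /partition_sum (bigD1 set0) /=; last first.
    rewrite part0 /= /admissible /nc_rel /no_singleton /separated_tail.
    by apply/and3P; split; apply/forallP; case.
  rewrite big1 ?addr0 /partition_weight ?big_set0 // => P /andP[/andP[/and3P[_ _ nP0] _] nP].
  have /set0Pn[V VP] := nP; have V0 : V = set0 by apply/setP => -[].
  by move: nP0; rewrite -V0 VP.
rewrite /open_moment /partition_sum big_pred0 // => P.
apply/negbTE/negP => /andP[_ /and3P[_ /no_singletonP ns /separated_tailP sd]].
have [j nj Rj] := ns ord0; move: nj; rewrite (sd ord0 j) ?eqxx //; lia.
Qed.

Lemma open_moment0 (N : nat) (x : seq B) : open_moment N x 0 = open_moment N x 1.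
Proof. by apply: eq_bigl => P; rewrite /admissible !separated_tail_small. Qed.

Lemma open_moment_NC (x : seq B) :
  open_moment (size x) x 0 = \sum_(P : {set {set 'I_(size x)}} | NCpart P) partition_weight x P.
Proof.
rewrite [RHS](bigID (fun P => no_singleton (same_block P))) /= [X in _ = _ + X]big1 ?addr0.
  apply: eq_bigl => P; rewrite NCpartE /admissible separated_tail_small // andbT.
  by rewrite andbA.
move=> P /andP[]; rewrite NCpartE => /andP[partP _] /forallPn[i /existsPn lonely].
have /and3P[/eqP cov tI _] := partP.
have block_i : pblock P i = [set i].
  apply/setP => j; rewrite inE; apply/idP/eqP => [ji|->]; last by rewrite mem_pblock cov inE.
  apply/eqP; apply: contraR (lonely j) => nji; rewrite nji /same_block eq_pblock ?cov ?inE //.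
have iP : [set i] \in P by rewrite -block_i pblock_mem // cov inE.
rewrite /partition_weight (bigD1 _ iP) /=.
have := size_block_word (x := x) [set i] erefl; rewrite cards1.
by case: (block_word _ _) => [|a [|]] //= _; rewrite mul0r.
Qed.

End OpenMomentFacts.

Section Recursion.
Variables (C : numClosedFieldType) (B : algType C) (phi : B -> C) (Lam : B -> B -> B).
Hypothesis phi_linear : forall a x y, phi (a *: x + y) = a * phi x + phi y.
Hypothesis Lam_linear_r : forall a x y z, Lam z (a *: x + y) = a *: Lam z x + Lam z y.
Local Notation open_moment := (open_moment phi Lam).
Local Notation partition_sum := (partition_sum phi Lam).

Lemma open_moment_split (p k : nat) (x : seq B) :
  open_moment (p + k).+2 x k.+1 =
    open_moment (p + k).+2 x k.+2
  + partition_sum (fun R : rel 'I_(p + k).+2 =>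
                     [&& admissible k.+1 R, linked_next p R & ~~ linked_far p R]) x
  + partition_sum (fun R : rel 'I_(p + k).+2 =>
                     [&& admissible k.+1 R, linked_next p R & linked_far p R]) x.
Proof.
rewrite {1}/open_moment /partition_sum (bigID (fun P => linked_next p (same_block P))) /=.
rewrite addrC -addrA; congr (_ + _).
  apply: eq_bigl => P; rewrite -andbA (@admissible_unlinked_next _ _ _ (pblock P)) //.
rewrite (bigID (fun P => linked_far p (same_block P))) /= addrC.
by congr (_ + _); apply: eq_bigl => P; rewrite -!andbA.
Qed.

Lemma open_moment_step (pre r : seq B) (u t : B) :
  open_moment (size pre + size r).+2 (pre ++ [:: u, t & r]) (size r).+1
  = open_moment (size pre + size r).+2 (pre ++ [:: u, t & r]) (size r).+2
  + phi (u * t) * open_moment (size pre + size r) (pre ++ r) (size r)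
  + open_moment (size pre + size r).+1 (pre ++ Lam u t :: r) (size r).+1.
Proof. by rewrite open_moment_split partition_sum_excise // partition_sum_collapse. Qed.

Lemma vacuum_amplitude_open_moment (v s : seq B) :
  vacuum_amplitude phi Lam v s = open_moment (size v + size s) (rev v ++ s) (size s).
Proof.
elim: v s => [|u v IH] s; first by rewrite open_moment_all_open size_eq0.
rewrite /= rev_cons cat_rcons; case: s => [|t r].
  by rewrite !addr0 IH open_moment0 addn0 addn1.
have -> : ((size v).+1 + size (t :: r) = (size (rev v) + size r).+2)%N by rewrite size_rev /=; lia.
rewrite [size (t :: r)]/= open_moment_step size_rev.
congr (_ + _ + _); rewrite ?IH /= ?addnS //.
case: r => [|t2 r] //.
by rewrite IH /= addnS -(size_rev v) open_moment_scale.
Qed.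

End Recursion.

Section Cumulants.
Variables (C : numClosedFieldType) (B : algType C) (star : B -> B).
Variables (phi : B -> C) (gamma : B -> B) (Lam : B -> B -> B).
Hypothesis phi_linear : forall a x y, phi (a *: x + y) = a * phi x + phi y.
Hypothesis Lam_linear_r : forall a x y z, Lam z (a *: x + y) = a *: Lam z x + Lam z y.
Hypothesis gamma0 : forall b, gamma b = 0.
Local Notation X := (Xop phi gamma Lam).

Lemma psi_prod_Xop_NC (w : seq B) :
  psi star phi gamma (prod_op (map X w))
  = \sum_(P : {set {set 'I_(size w)}} | NCpart P) partition_weight phi Lam w P.
Proof.
rewrite psi_prod_Xop // vacuum_amplitude_open_moment // size_rev revK addn0 cats0.
exact: open_moment_NC.
Qed.

Variable Rc : seq (op B) -> C.
Hypothesis Rc_free_cumulants : free_cumulants (psi star phi gamma) Rc.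

Lemma free_cumulant_X (w : seq B) : w != [::] -> Rc (map X w) = kappa phi Lam w.
Proof.
have [n] := ubnP (size w); elim: n w => // n IH w size_w w_nil.
have blocks (V : {set 'I_(size w)}) :
    [seq X (nth 0 w i) | i : 'I_(size w) <- enum V] = map X (block_word w V).
  by rewrite block_word_enum // -map_comp.
have := Rc_free_cumulants (fun i : 'I_(size w) => X (nth 0 w i)).
rewrite enumT -enum_setT blocks block_word_setT psi_prod_Xop_NC.
have w_gt0 : (0 < size w)%N by rewrite lt0n size_eq0.
rewrite !(bigD1 _ (NCpart_full_block w_gt0)) /=.
set full := [set [set: 'I_(size w)]].
have rest : \sum_(P | NCpart P && (P != full)) partition_weight phi Lam w P
    = \sum_(P | NCpart P && (P != full))
        \prod_(V in P) Rc [seq X (nth 0 w i) | i : 'I_(size w) <- enum V].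
  apply: eq_bigr => P /andP[NC_P not_full]; apply: eq_bigr => V VP.
  move: NC_P; rewrite NCpartE => /andP[partP _]; have /and3P[_ _ nP0] := partP.
  have V_gt0 : (0 < #|V|)%N by rewrite card_gt0; apply: contraNneq nP0 => <-.
  have V_lt : (#|V| < size w)%N.
    rewrite -[X in (_ < X)%N]card_ord -cardsT proper_card // properT.
    apply: contraNneq not_full => VT.
    by rewrite VT in VP; rewrite (partition_with_full_block partP VP).
  rewrite blocks IH // -?size_eq0 size_block_word //; lia.
rewrite rest => /addIr.
by rewrite /partition_weight !big_set1 blocks block_word_setT => ->.
Qed.

End Cumulants.

Theorem corollary3p8 (R : realType) (B : algType R[i]) (star : B -> B)
    (phi : B -> R[i]) (gamma : B -> B) (Lam : B -> B -> B) :
  is_star_algebra star ->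
  star_linear_functional star phi ->
  star_linear_map star gamma ->
  star_linear_bimap star Lam ->
  positive_functional star phi ->
  faithful_functional star phi ->
  completely_positive star (gp phi gamma) ->
  Lambda_symmetric_fun star Lam phi ->
  Lambda_symmetric star Lam gamma ->
  (forall b, gamma b = 0) ->
  forall Rc : seq (op B) -> R[i],
  free_cumulants (psi star phi gamma) Rc ->
  forall (u1 : B) (mid : seq B) (un : B),
    Rc [seq Xop phi gamma Lam u | u <- u1 :: rcons mid un] =
    psi star phi gamma
      (prod_op (aminus phi gamma u1 :: rcons [seq azero Lam u | u <- mid] (aplus un))).
Proof.
move=> _ [phi_linear _] _ [_ Lam_linear_r _] _ _ _ _ _ gamma0 Rc Rc_free u1 mid un.
rewrite psi_aminus_azero_aplus (free_cumulant_X phi_linear Lam_linear_r gamma0 Rc_free) //.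
by rewrite kappa_cons ?nest_Lam_rcons //; case: mid.
Qed.
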